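(* Let $H(u)=\sum_{n\ge0}\mathbf h_nu^n$, and for $k\ge0$ let $\prod^{\leftarrow}_{0\le j\le k}H(q^j)=H(q^k)H(q^{k-1})\cdots H(q^0)$. Then, as an identity with coefficients in $\mathbb Q[[q,t]]$, \[ \sum_{k\ge0}t^k\,H(q^k)H(q^{k-1})\cdots H(1)=\sum_{n\ge0}\frac{\sum_{L\vDash n}t^{\mathrm{des}(L)}q^{\mathrm{maj}(L)}\mathbf r_L}{(1-t)(1-tq)\cdots(1-tq^n)}, \] where for a nonempty composition $L=(L_1,\dots,L_k)$, $\mathrm{des}(L)=k-1$ and $\mathrm{maj}(L)=(k-1)L_1+(k-2)L_2+\cdots+L_{k-1}$, and for the empty composition $\mathrm{des}=\mathrm{maj}=0$ and $\mathbf r_\emptyset=1$.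
   Context: Work in formal power series in noncommuting variables $X_1,X_2,\dots$ with coefficients in $\mathbb Q[[q,t]]$ ($q,t$ commuting indeterminates commuting with the $X_i$). $\mathbf h_n=\sum_{i_1\le\cdots\le i_n}X_{i_1}\cdots X_{i_n}$, $\mathbf h_0=1$. $L\vDash n$ means $L$ is a composition of $n$. For $L=(L_1,\dots,L_k)\vDash n$, $\mathbf r_L=\sum X_{i_1}\cdots X_{i_n}$ over $(i_1,\dots,i_n)$ with $i_1\le\cdots\le i_{L_1}>i_{L_1+1}\le\cdots\le i_{L_1+L_2}>\cdots>i_{L_1+\cdots+L_{k-1}+1}\le\cdots\le i_n$. *)

From HB Require Import structures.
From mathcomp Require Import all_boot all_order all_algebra.
Set Implicit Arguments. Unset Strict Implicit. Unset Printing Implicit Defensive.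
Import Order.TTheory GRing.Theory Num.Theory.
Local Open Scope ring_scope.

(* f a b = coefficient of q^a t^b in f. *)
Definition ps := nat -> nat -> rat.

Definition psmul (f g : ps) : ps := fun a b =>
  \sum_(i < a.+1) \sum_(j < b.+1) f i j * g (a - i)%N (b - j)%N.

Definition ps1 : ps := fun a b => if (a == 0%N) && (b == 0%N) then 1 else 0.

Definition mono (a0 b0 : nat) : ps := fun a b =>
  if (a == a0) && (b == b0) then 1 else 0.

(* 1/(1 - t q^j), expanded as the geometric series sum_m (t q^j)^m *)
Definition geom (j : nat) : ps := fun a b => if a == (j * b)%N then 1 else 0.

Definition denom_inv (n : nat) : ps := foldr psmul ps1 [seq geom j | j <- iota 0 n.+1].

(* A word X_{i_1}...X_{i_m} is the sequence [:: i_1; ...; i_m] (letters i >= 1);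
   F w is the coefficient (in Q[[q,t]]) of the word w in F. *)
Definition ncs := seq nat -> ps.

Definition ncmul (F G : ncs) : ncs := fun w a b =>
  \sum_(i < (size w).+1) psmul (F (take i w)) (G (drop i w)) a b.

Definition ncscale (c : ps) (F : ncs) : ncs := fun w => psmul c (F w).

Definition sums_to (F : nat -> ncs) (S : ncs) : Prop :=
  forall w a b, exists N, forall M, (N <= M)%N ->
    \sum_(n < M) F n w a b = S w a b.

Definition letters_pos (w : seq nat) : bool := all (fun i => 0 < i)%N w.

(* h_n = sum_{i_1 <= ... <= i_n} X_{i_1} ... X_{i_n} *)
Definition hser (n : nat) : ncs := fun w =>
  if [&& size w == n, sorted leq w & letters_pos w] then ps1 else (fun _ _ => 0).

Definition Hterm (k n : nat) : ncs := ncscale (mono (k * n) 0) (hser n).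

Fixpoint prodH (Hs : nat -> ncs) (k : nat) : ncs :=
  match k with
  | 0 => Hs 0%N
  | k'.+1 => ncmul (Hs k) (prodH Hs k')
  end.

Definition LHSterm (Hs : nat -> ncs) (k : nat) : ncs := ncscale (mono 0 k) (prodH Hs k).

Fixpoint comps_aux (fuel n : nat) : seq (seq nat) :=
  match fuel with
  | 0 => if n == 0%N then [:: [::]] else [::]
  | fuel'.+1 =>
      if n == 0%N then [:: [::]]
      else flatten [seq [seq i :: c | c <- comps_aux fuel' (n - i)] | i <- iota 1 n]
  end.

(* all compositions L of n (each exactly once), L = (L_1,...,L_k), L_i >= 1 *)
Definition comps (n : nat) : seq (seq nat) := comps_aux n n.

Definition des (L : seq nat) : nat := (size L).-1.

Definition maj (L : seq nat) : nat :=
  \sum_(j < (size L).-1) (((size L).-1 - j) * nth 0 L j)%N.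

Definition bounds (L : seq nat) : seq nat :=
  [seq sumn (take j L) | j <- iota 1 (size L).-1].

(* w occurs (with coefficient 1) in r_L: i_1<=...<=i_{L_1} > i_{L_1+1} <= ... *)
Definition ribbon_ok (L : seq nat) (w : seq nat) : bool :=
  [&& size w == sumn L, letters_pos w &
   all (fun p => if p.+1 \in bounds L
                 then (nth 0 w p.+1 < nth 0 w p)%N
                 else (nth 0 w p <= nth 0 w p.+1)%N)
       (iota 0 (size w).-1)].

Definition rser (L : seq nat) : ncs := fun w =>
  if ribbon_ok L w then ps1 else (fun _ _ => 0).

Definition numer (n : nat) : ncs := fun w a b =>
  \sum_(L <- comps n) psmul (mono (maj L) (des L)) (rser L w) a b.

Definition RHSterm (n : nat) : ncs := ncscale (denom_inv n) (numer n).

(* Both sides are series S_w(q,t) indexed by words w, and both satisfy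
     S_[] = 1/(1-t),   S_{x w} = [x >= 1] (tq)^{[x > w_1]} S_w(q, tq) / (1 - t),
   which determines them.  On the right, r_L contains w exactly when L is the descent
   composition of w; prepending x adds a descent iff x > w_1 and raises maj by des + [x > w_1],
   while the denominator satisfies D_{n+1}(q,t) = D_n(q,tq) / (1 - t).  On the left, in the
   coefficient of t^k either the factor H(q^k) reads nothing (the factor 1/(1-t)), or it reads a
   weakly increasing prefix x u of weight q^{k(1+|u|)}; deleting x either leaves the prefix u to
   H(q^k) (no descent at x) or forces u empty and passes to t^{k-1}. *)

From HB Require Import structures.
From mathcomp Require Import all_boot all_order all_algebra.
From mathcomp Require Import zify.
From Stdlib Require Import FunctionalExtensionality.
Set Implicit Arguments. Unset Strict Implicit. Unset Printing Implicit Defensive.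
Import Order.TTheory GRing.Theory Num.Theory.
Local Open Scope ring_scope.

(** * The coefficient ring Q[[q,t]] *)

Lemma sum_ord_at n k (G : 'I_n -> rat) (hk : (k < n)%N) :
  (forall i : 'I_n, (i : nat) != k -> G i = 0) -> \sum_i G i = G (Ordinal hk).
Proof. by move=> G0; rewrite (bigD1 (Ordinal hk)) //= big1 ?addr0 // => i /G0. Qed.

Lemma sum_ord_out n k (G : 'I_n -> rat) : (n <= k)%N ->
  (forall i : 'I_n, (i : nat) != k -> G i = 0) -> \sum_i G i = 0.
Proof.
move=> nk G0; rewrite big1 // => i _; apply: G0.
by rewrite neq_ltn (leq_trans (ltn_ord i) nk).
Qed.

Definition ps0 : ps := fun _ _ => 0.

(* The ring laws of Q[[q,t]] are inherited from Q[q][t] by truncating in both degrees. *)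
Definition bipoly := {poly {poly rat}}.

Definition ps_agree (N : nat) (f : ps) (p : bipoly) :=
  forall i j, (i < N)%N -> (j < N)%N -> f i j = (p`_j)`_i.

Definition ps_trunc (N : nat) (f : ps) : bipoly := \poly_(j < N) \poly_(i < N) f i j.

Lemma ps_truncP N f : ps_agree N f (ps_trunc N f).
Proof. by move=> i j ltiN ltjN; rewrite coef_poly ltjN coef_poly ltiN. Qed.

Lemma ps_agree_eq (f g : ps) (P : nat -> bipoly) :
  (forall N, ps_agree N f (P N)) -> (forall N, ps_agree N g (P N)) -> f = g.
Proof.
move=> fP gP; apply: functional_extensionality => a.
apply: functional_extensionality => b.
have ltaN : (a < (maxn a b).+1)%N by rewrite ltnS leq_maxl.
have ltbN : (b < (maxn a b).+1)%N by rewrite ltnS leq_maxr.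
by rewrite (fP (maxn a b).+1) // (gP (maxn a b).+1).
Qed.

Lemma bipoly_coefM (p r : bipoly) a b :
  ((p * r)`_b)`_a = \sum_(i < a.+1) \sum_(j < b.+1) (p`_j)`_i * (r`_(b - j))`_(a - i).
Proof.
rewrite coefM coef_sum exchange_big /=; apply: eq_bigr => j _.
by rewrite coefM.
Qed.

Lemma ps_agreeM N f g p r :
  ps_agree N f p -> ps_agree N g r -> ps_agree N (psmul f g) (p * r).
Proof.
move=> fp gr i j ltiN ltjN; rewrite bipoly_coefM; apply: eq_bigr => i' _.
apply: eq_bigr => j' _.
have lti'N : (i' < N)%N by apply: leq_ltn_trans ltiN; rewrite -ltnS.
have ltj'N : (j' < N)%N by apply: leq_ltn_trans ltjN; rewrite -ltnS.
by rewrite fp ?gr // (leq_ltn_trans (leq_subr _ _)).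
Qed.

Lemma psmulA f g h : psmul (psmul f g) h = psmul f (psmul g h).
Proof.
apply: (@ps_agree_eq _ _ (fun N => ps_trunc N f * ps_trunc N g * ps_trunc N h)) => N.
  by apply: ps_agreeM; first apply: ps_agreeM; apply: ps_truncP.
by rewrite -mulrA; apply: ps_agreeM; last apply: ps_agreeM; apply: ps_truncP.
Qed.

Lemma psmulC f g : psmul f g = psmul g f.
Proof.
apply: (@ps_agree_eq _ _ (fun N => ps_trunc N f * ps_trunc N g)) => N.
  by apply: ps_agreeM; apply: ps_truncP.
by rewrite mulrC; apply: ps_agreeM; apply: ps_truncP.
Qed.

Lemma psmul_monoE p d X a b : psmul (mono p d) X a b =
  if (p <= a)%N && (d <= b)%N then X (a - p)%N (b - d)%N else 0.
Proof.
rewrite /psmul /mono; case: (leqP p a) => [lepa|ltap] /=; last first.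
  by apply: sum_ord_out ltap _ => i /negbTE ip; rewrite big1 // => j _; rewrite ip mul0r.
rewrite (@sum_ord_at _ p) /= ?eqxx; last first.
  by move=> i /negbTE ip; rewrite big1 // => j _; rewrite ip mul0r.
case: (leqP d b) => [ledb|ltbd].
  by rewrite (@sum_ord_at _ d) /= ?eqxx ?mul1r // => j /negbTE ->; rewrite mul0r.
by apply: sum_ord_out ltbd _ => j /negbTE ->; rewrite mul0r.
Qed.

Lemma psmulr0 f : psmul f ps0 = ps0.
Proof.
apply: functional_extensionality => a; apply: functional_extensionality => b.
by rewrite /psmul big1 // => i _; rewrite big1 // => j _; rewrite mulr0.
Qed.

Lemma psmulr1 f : psmul f ps1 = f.
Proof.
apply: functional_extensionality => a; apply: functional_extensionality => b.
by rewrite psmulC (_ : ps1 = mono 0 0) // psmul_monoE !subn0.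
Qed.

(* [tq_subst f] is the series f(q, tq). *)
Definition tq_subst (f : ps) : ps := fun a b => if (b <= a)%N then f (a - b)%N b else 0.

Definition tq_bipoly (p : bipoly) : bipoly := \poly_(j < size p) (p`_j * 'X^j).

Lemma coef_tq_bipoly p j : (tq_bipoly p)`_j = p`_j * 'X^j.
Proof.
by rewrite coef_poly; case: ltnP => // le_p_j; rewrite nth_default // mul0r.
Qed.

Lemma tq_bipolyM p r : tq_bipoly (p * r) = tq_bipoly p * tq_bipoly r.
Proof.
apply/polyP => b; rewrite coef_tq_bipoly !coefM big_distrl /=.
apply: eq_bigr => j _; rewrite !coef_tq_bipoly mulrACA -exprD subnKC //.
by rewrite -ltnS.
Qed.

Lemma ps_agree_tq N f p : ps_agree N f p -> ps_agree N (tq_subst f) (tq_bipoly p).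
Proof.
move=> fp i j ltiN ltjN; rewrite /tq_subst coef_tq_bipoly coefMXn.
by case: leqP => // _; rewrite fp // (leq_ltn_trans (leq_subr _ _)).
Qed.

Lemma tq_substM f g : tq_subst (psmul f g) = psmul (tq_subst f) (tq_subst g).
Proof.
apply: (@ps_agree_eq _ _ (fun N => tq_bipoly (ps_trunc N f * ps_trunc N g))) => N.
  by apply/ps_agree_tq/ps_agreeM; apply: ps_truncP.
by rewrite tq_bipolyM; apply: ps_agreeM; apply/ps_agree_tq/ps_truncP.
Qed.

Lemma tq_subst0 : tq_subst ps0 = ps0.
Proof.
apply: functional_extensionality => a; apply: functional_extensionality => b.
by rewrite /tq_subst; case: leqP.
Qed.

Lemma tq_subst1 : tq_subst ps1 = ps1.
Proof.
apply: functional_extensionality => a; apply: functional_extensionality => b.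
by rewrite /tq_subst /ps1; case: b => [|b]; rewrite ?subn0 //; case: leqP; rewrite ?andbF.
Qed.

Lemma tq_subst_geom j : tq_subst (geom j) = geom j.+1.
Proof.
apply: functional_extensionality => a; apply: functional_extensionality => b.
rewrite /tq_subst /geom; case: leqP => [leba|ltab].
  by congr (if _ then _ else _); apply/eqP/eqP; lia.
by case: eqP => //; lia.
Qed.

Lemma iota_succ m n : map succn (iota m n) = iota m.+1 n.
Proof. by elim: n m => //= n IH m; rewrite IH. Qed.

Lemma tq_subst_prod_geom s :
  tq_subst (foldr psmul ps1 [seq geom j | j <- s]) =
  foldr psmul ps1 [seq geom j | j <- map succn s].
Proof. by elim: s => [|j s IH] /=; rewrite ?tq_subst1 // tq_substM IH tq_subst_geom. Qed.

Lemma denom_inv0 : denom_inv 0 = geom 0.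
Proof. exact: psmulr1. Qed.

Lemma denom_invS n : denom_inv n.+1 = psmul (geom 0) (tq_subst (denom_inv n)).
Proof. by rewrite /denom_inv tq_subst_prod_geom iota_succ. Qed.

Lemma psmul_geom0 F a b : psmul (geom 0) F a b =
  (if b is b'.+1 then psmul (geom 0) F a b' else 0) + F a b.
Proof.
have coefE c : psmul (geom 0) F a c = \sum_(j < c.+1) F a (c - j)%N.
  rewrite /psmul (@sum_ord_at _ 0) /=; last first.
    by move=> i /negbTE i0; rewrite big1 // => j _; rewrite /geom mul0n i0 mul0r.
  by apply: eq_bigr => j _; rewrite /geom mul1r subn0.
by case: b => [|b]; rewrite !coefE ?big_ord1 ?add0r // big_ord_recl subn0 addrC.
Qed.

(* Dividing by 1 - t: the t-coefficients of [Z] are the partial sums of those of [F]. *)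
Lemma geom0_solve (F Z : ps) :
  (forall a b, Z a b = (if b is b'.+1 then Z a b' else 0) + F a b) ->
  Z = psmul (geom 0) F.
Proof.
move=> ZE; apply: functional_extensionality => a; apply: functional_extensionality.
by elim=> [|b IH]; rewrite ZE psmul_geom0 ?IH.
Qed.

Lemma tq_subst_monoE e X a b : tq_subst (psmul (mono 0 e) X) a b =
  if (b <= a)%N && (e <= b)%N then X (a - b)%N (b - e)%N else 0.
Proof. by rewrite /tq_subst psmul_monoE subn0; case: leqP. Qed.

Lemma tq_subst_mono e M d :
  tq_subst (psmul (mono 0 e) (mono M d)) = mono (M + d + e) (d + e).
Proof.
apply: functional_extensionality => a; apply: functional_extensionality => b.
rewrite tq_subst_monoE /mono; case: ifP => [/andP [leba leeb] | out].
  by congr (if _ then _ else _); apply/andP/andP => -[/eqP ? /eqP ?]; split; apply/eqP; lia.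
rewrite [_ && _](_ : _ = false) //; apply/negbTE/andP => -[/eqP ? /eqP ?].
by move/negbT: out; rewrite negb_and -!ltnNge => /orP [] ?; lia.
Qed.

(** * The recursion on words *)

Definition head_des (x : nat) (w : seq nat) : nat :=
  if w is y :: _ then (if (y < x)%N then 1 else 0)%N else 0%N.

Definition word_recursion (S : ncs) : Prop :=
  S [::] = geom 0 /\
  forall x w, S (x :: w) = psmul (geom 0)
    (if (0 < x)%N then tq_subst (psmul (mono 0 (head_des x w)) (S w)) else ps0).

Lemma word_recursion_uniq S T : word_recursion S -> word_recursion T -> S = T.
Proof.
move=> [S0 SS] [T0 TS]; apply: functional_extensionality.
by elim=> [|x w IH]; rewrite ?S0 ?T0 // SS TS IH.
Qed.

(** * Compositions, descent compositions and ribbons *)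

Definition is_comp (n : nat) (L : seq nat) := (sumn L == n) && all (fun c => 0 < c)%N L.

Lemma is_comp0 L : is_comp 0 L = (L == [::]).
Proof. by case: L => [|[|c] L]; rewrite /is_comp //= andbF. Qed.

Lemma mem_comps_aux f n L : (n <= f)%N -> (L \in comps_aux f n) = is_comp n L.
Proof.
elim: f n L => [|f IH] [|n] L len; rewrite ?inE ?is_comp0 //.
change (L \in flatten [seq [seq c :: L' | L' <- comps_aux f (n.+1 - c)] | c <- iota 1 n.+1]
  = is_comp n.+1 L).
apply/flatten_mapP/idP => [[c] | ].
  rewrite mem_iota => /andP [c0 cn] /mapP [L' L'comp ->].
  move: L'comp; rewrite IH; last by lia.
  rewrite /is_comp /= => /andP [/eqP sL' ->]; rewrite andbT.
  by apply/andP; split; [apply/eqP|]; lia.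
case: L => [|c L] //; rewrite /is_comp -[sumn _]/(c + sumn L)%N.
move=> /andP [/eqP sL /andP [c0 Lpos]]; exists c; first by rewrite mem_iota; lia.
apply/mapP; exists L => //; rewrite IH; last by lia.
by apply/andP; split => //; apply/eqP; lia.
Qed.

Lemma mem_comps n L : (L \in comps n) = is_comp n L.
Proof. exact: mem_comps_aux. Qed.

Lemma uniq_comps n : uniq (comps n).
Proof.
rewrite /comps; move: {2}n; elim: n => [|f IH] n /=; first by case: (n == 0%N).
case: (n == 0%N) => //; elim: (iota 1 n) (iota_uniq 1 n) => //= c s IHs /andP [cs suniq].
rewrite cat_uniq map_inj_uniq ?IH ?IHs ?andbT //=; last by move=> L1 L2 [].
apply/hasPn => L /flatten_mapP [d ds /mapP [L' _ ->]].
by apply/mapP => -[L'' _ [dc _]]; move: cs; rewrite -dc ds.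
Qed.

Definition incr_head (L : seq nat) : seq nat := if L is c :: L' then c.+1 :: L' else [:: 1%N].

(* Its parts are the lengths of the maximal weakly increasing runs. *)
Fixpoint descent_comp (v : seq nat) : seq nat :=
  match v with
  | [::] => [::]
  | [:: _] => [:: 1%N]
  | x :: (y :: _) as w => if (y < x)%N then 1%N :: descent_comp w else incr_head (descent_comp w)
  end.

Lemma descent_comp_cons2 x y w : descent_comp (x :: y :: w) =
  if (y < x)%N then 1%N :: descent_comp (y :: w) else incr_head (descent_comp (y :: w)).
Proof. by []. Qed.

Lemma descent_compS y w : exists c L, descent_comp (y :: w) = c.+1 :: L.
Proof.
elim: w y => [|z w IH] y; first by exists 0%N, [::].
have [c [L dcE]] := IH z; rewrite descent_comp_cons2 dcE.
by case: ltnP; [exists 0%N, (c.+1 :: L) | exists c.+1, L].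
Qed.

Lemma is_comp_descent_comp v : is_comp (size v) (descent_comp v).
Proof.
elim: v => [|x [|y w] IH] //; move: IH; rewrite descent_comp_cons2 /is_comp.
by case: ltnP => _; have [c [L ->]] := descent_compS y w.
Qed.

(* [v] descends exactly at the positions in [B], counted from 1 as in [bounds]. *)
Definition descents_at (B : pred nat) (v : seq nat) : bool :=
  all (fun p => if B p.+1 then (nth 0 v p.+1 < nth 0 v p)%N else (nth 0 v p <= nth 0 v p.+1)%N)
      (iota 0 (size v).-1).

Lemma letters_pos_cons x w : letters_pos (x :: w) = (0 < x)%N && letters_pos w.
Proof. by []. Qed.

Lemma ribbon_okE L v : ribbon_ok L v =
  [&& size v == sumn L, letters_pos v & descents_at (fun p => p \in bounds L) v].
Proof. by []. Qed.

Lemma descents_at_cons2 B x y w : descents_at B (x :: y :: w) =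
  (if B 1%N then (y < x)%N else (x <= y)%N) && descents_at (fun p => B p.+1) (y :: w).
Proof. by rewrite /descents_at /= -iota_succ all_map. Qed.

Lemma eq_descents_at B B' v :
  (forall p, B p.+1 = B' p.+1) -> descents_at B v = descents_at B' v.
Proof. by move=> BB'; apply: eq_all => p /=; rewrite BB'. Qed.

Lemma bounds_cons2 c d L : bounds [:: c, d & L] = c :: map (addn c) (bounds (d :: L)).
Proof.
by rewrite /bounds /= -iota_succ -!map_comp addn0.
Qed.

Lemma bounds_succ c L : bounds (c.+1 :: L) = map succn (bounds (c :: L)).
Proof.
rewrite /bounds -map_comp; apply/eq_in_map => j; rewrite mem_iota => /andP [j1 _].
by case: j j1.
Qed.

Lemma sumn_eq0_pos L : all (fun c => 0 < c)%N L -> (sumn L == 0%N) = (L == [::]).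
Proof. by case: L => [|[|c] L]. Qed.

Lemma sumn_eq1_pos L : all (fun c => 0 < c)%N L -> (sumn L == 1%N) = (L == [:: 1%N]).
Proof.
by case: L => [|[|[|c]] L] //= Lpos; rewrite add1n eqSS sumn_eq0_pos.
Qed.

Lemma ribbon_ok_nil L : all (fun c => 0 < c)%N L -> ribbon_ok L [::] = (L == [::]).
Proof. by move=> Lpos; rewrite ribbon_okE eq_sym sumn_eq0_pos // andbT. Qed.

Lemma ribbon_ok_one L x :
  all (fun c => 0 < c)%N L -> ribbon_ok L [:: x] = (0 < x)%N && (L == [:: 1%N]).
Proof.
by move=> Lpos; rewrite ribbon_okE eq_sym sumn_eq1_pos // /descents_at /= !andbT andbC.
Qed.

Lemma ribbon_ok_cons_one x y w d L : ribbon_ok [:: 1%N, d & L] (x :: y :: w) =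
  [&& 0 < x, y < x & ribbon_ok (d :: L) (y :: w)]%N.
Proof.
rewrite !ribbon_okE descents_at_cons2 bounds_cons2 inE eqxx /=.
rewrite (@eq_descents_at _ (fun p => p \in bounds (d :: L))) => [|p]; last first.
  by rewrite inE (mem_map (@addnI 1%N)).
by rewrite add1n eqSS; case: (0 < x)%N; case: (y < x)%N; case: (0 < y)%N; rewrite ?andbF.
Qed.

Lemma ribbon_ok_cons_succ x y w c L : ribbon_ok (c.+2 :: L) (x :: y :: w) =
  [&& 0 < x, x <= y & ribbon_ok (c.+1 :: L) (y :: w)]%N.
Proof.
rewrite !ribbon_okE descents_at_cons2 bounds_succ (mem_map succn_inj).
rewrite (@eq_descents_at _ (fun p => p \in bounds (c.+1 :: L))) => [|p]; last first.
  by rewrite (mem_map succn_inj).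
have -> : (0%N \in bounds (c.+1 :: L)) = false.
  by rewrite bounds_succ; apply/mapP => -[].
have -> : (size [:: x, y & w] == sumn (c.+2 :: L)) = (size (y :: w) == sumn (c.+1 :: L)).
  by [].
rewrite letters_pos_cons.
by case: (0 < x)%N; case: (x <= y)%N; case: (_ == _); rewrite ?andbF.
Qed.

Lemma ribbon_ok_descent_comp v L : all (fun c => 0 < c)%N L ->
  ribbon_ok L v = letters_pos v && (L == descent_comp v).
Proof.
elim: v L => [|x [|y w] IH] L Lpos.
- by rewrite ribbon_ok_nil.
- by rewrite ribbon_ok_one // letters_pos_cons andbT.
have [c [T dcE]] := descent_compS y w.
rewrite descent_comp_cons2 dcE letters_pos_cons.
case: L Lpos => [|[|[|c']] L] // Lpos.
- by rewrite ribbon_okE /=; case: (y < x)%N; rewrite andbF.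
- case: L Lpos => [|d L] Lpos.
    by rewrite ribbon_okE /=; case: (y < x)%N; rewrite andbF.
  rewrite ribbon_ok_cons_one IH // dcE.
  by case: (ltnP y x) => _; case: (0 < x)%N; rewrite ?andbF //= eqseq_cons.
- rewrite ribbon_ok_cons_succ IH // dcE.
  by case: (ltnP y x) => _; case: (0 < x)%N; rewrite ?andbF //= eqseq_cons.
Qed.

(** * The right-hand side *)

Lemma maj_cons c L : maj (c :: L) = (size L * c + maj L)%N.
Proof.
by case: L => [|d L]; rewrite /maj ?big_ord0 // [size _]/= big_ord_recl subn0.
Qed.

Lemma descent_comp_stats x w :
  des (descent_comp (x :: w)) = (des (descent_comp w) + head_des x w)%N /\
  maj (descent_comp (x :: w)) = (maj (descent_comp w) + des (descent_comp w) + head_des x w)%N.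
Proof.
case: w => [|y w]; first by rewrite /maj !big_ord0.
have [c [T dcE]] := descent_compS y w.
rewrite descent_comp_cons2 /head_des dcE; case: (y < x)%N;
  rewrite /des /= !maj_cons /=; split; lia.
Qed.

Lemma psmul_rser f L v : psmul f (rser L v) = if ribbon_ok L v then f else ps0.
Proof. by rewrite /rser; case: ifP => _; [exact: psmulr1 | exact: psmulr0]. Qed.

Lemma numer_size v : numer (size v) v =
  if letters_pos v then mono (maj (descent_comp v)) (des (descent_comp v)) else ps0.
Proof.
apply: functional_extensionality => a; apply: functional_extensionality => b.
have dc_comp := is_comp_descent_comp v.
rewrite /numer (bigD1_seq (descent_comp v)) ?mem_comps ?uniq_comps //=.
rewrite big1_seq => [|L /andP [L_dc]]; last first.
  rewrite mem_comps => /andP [_ Lpos].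
  by rewrite psmul_rser ribbon_ok_descent_comp // (negbTE L_dc) andbF.
move: dc_comp => /andP [_ dc_pos].
by rewrite psmul_rser ribbon_ok_descent_comp // eqxx andbT addr0; case: (letters_pos v).
Qed.

Lemma numer_eq0 n v : n != size v -> numer n v = ps0.
Proof.
move=> n_v; apply: functional_extensionality => a; apply: functional_extensionality => b.
rewrite /numer big1_seq // => L /andP [_]; rewrite mem_comps => /andP [/eqP sL _].
by rewrite psmul_rser /ribbon_ok eq_sym sL (negbTE n_v).
Qed.

Lemma numer_cons x w : numer (size w).+1 (x :: w) =
  if (0 < x)%N then tq_subst (psmul (mono 0 (head_des x w)) (numer (size w) w)) else ps0.
Proof.
rewrite -[(size w).+1]/(size (x :: w)) !numer_size letters_pos_cons.
case: (0 < x)%N => //=; case: (letters_pos w); last by rewrite psmulr0 tq_subst0.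
by have [-> ->] := descent_comp_stats x w; rewrite tq_subst_mono.
Qed.

Definition rhs (w : seq nat) : ps := RHSterm (size w) w.

Lemma rhs_word_recursion : word_recursion rhs.
Proof.
split=> [|x w].
  by rewrite /rhs /RHSterm /ncscale denom_inv0 (numer_size [::]) /= /maj big_ord0 psmulr1.
rewrite /rhs /RHSterm /ncscale [size _]/= denom_invS numer_cons.
case: (0 < x)%N; last by rewrite !psmulr0.
by rewrite psmulA -tq_substM -psmulA (psmulC (denom_inv _)) psmulA.
Qed.

(** * The left-hand side *)

Definition Hq (k : nat) : ncs := fun w => Hterm k (size w) w.

Lemma Hq_coef k w a c : Hq k w a c =
  if [&& sorted leq w, letters_pos w, a == (k * size w)%N & c == 0%N] then 1 else 0.
Proof.
rewrite /Hq /Hterm /ncscale psmul_monoE /hser eqxx subn0 /=.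
case: (sorted leq w); case: (letters_pos w); case: leqP => //= [le_ka | lt_ak].
  by rewrite /ps1 subn_eq0 (eqn_leq a) le_ka andbT.
by rewrite (_ : (a == _) = false) //; apply/negbTE; rewrite neq_ltn lt_ak.
Qed.

Definition t_free (f : ps) := forall a c, (0 < c)%N -> f a c = 0.

Lemma psmul_t_free f g : t_free f -> t_free g -> t_free (psmul f g).
Proof.
move=> f0 g0 a c c0; rewrite /psmul big1 // => i _; rewrite big1 // => j _.
by case: (posnP j) => [->|j0]; [rewrite subn0 g0 ?mulr0 | rewrite f0 ?mul0r].
Qed.

Lemma prodH_t_free k w : t_free (prodH Hq k w).
Proof.
have Hq0 k' u : t_free (Hq k' u) by move=> a [|c] // _; rewrite Hq_coef !andbF.
elim: k w => [|k IH] w //= a c c0.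
by rewrite /ncmul big1 // => i _; apply: psmul_t_free.
Qed.

Lemma prodH0_coef w a :
  prodH Hq 0 w a 0 = if [&& sorted leq w, letters_pos w & a == 0%N] then 1 else 0.
Proof. by rewrite /= Hq_coef mul0n andbT. Qed.

Lemma prodH_succ_coef k w a : prodH Hq k.+1 w a 0 =
  \sum_(i < (size w).+1)
    (if [&& sorted leq (take i w), letters_pos (take i w) & (k.+1 * i <= a)%N]
     then prodH Hq k (drop i w) (a - k.+1 * i)%N 0 else 0).
Proof.
rewrite [LHS]/= /ncmul; apply: eq_bigr => i _.
have size_take_i : size (take i w) = i by rewrite size_takel // -ltnS.
rewrite /psmul; under eq_bigr => i' _ do
  rewrite big_ord1 /= Hq_coef size_take_i subnn eqxx andbT.
case: (sorted leq _); case: (letters_pos _) => /=; try by rewrite big1 // => i' _; rewrite mul0r.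
case: (leqP (k.+1 * i) a) => [le_a | lt_a].
  by rewrite (@sum_ord_at _ (k.+1 * i)) /= ?eqxx ?mul1r // => i' /negbTE ->; rewrite mul0r.
by apply: sum_ord_out lt_a _ => i' /negbTE ->; rewrite mul0r.
Qed.

(* Only the k = b summand of the left side contributes to t^b, the products being free of t. *)
Definition lhs (w : seq nat) : ps := fun a b => prodH Hq b w a 0.

Lemma lhs_nil : lhs [::] = geom 0.
Proof.
apply: functional_extensionality => a; apply: functional_extensionality => b.
rewrite /lhs /geom mul0n; elim: b a => [|b IH] a; first by rewrite prodH0_coef.
by rewrite prodH_succ_coef big_ord1 /= muln0 subn0 IH.
Qed.

Lemma prodH_succ_cons_coef k x w a : prodH Hq k.+1 (x :: w) a 0 =
  prodH Hq k (x :: w) a 0 +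
  (if (0 < x)%N && (k < a)%N then
     \sum_(i < (size w).+1)
       (if [&& path leq x (take i w), letters_pos (take i w) & (k.+1 * i <= a - k.+1)%N]
        then prodH Hq k (drop i w) (a - k.+1 - k.+1 * i)%N 0 else 0)
   else 0).
Proof.
rewrite prodH_succ_coef big_ord_recl /= muln0 subn0; congr (_ + _).
case: ifP => [/andP [x0 lt_ka] | x0_ka].
  apply: eq_bigr => i _; rewrite /bump leq0n add1n /= x0 /=.
  have -> : (k.+1 * i.+1 <= a)%N = (k.+1 * i <= a - k.+1)%N by apply/idP/idP; lia.
  by have -> : (a - k.+1 * i.+1 = a - k.+1 - k.+1 * i)%N by lia.
rewrite big1 // => i _; rewrite /bump leq0n add1n /=.
case: (boolP (0 < x)%N) x0_ka => [x0 /= /negbT | _ _]; last by rewrite andbF.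
rewrite -leqNgt => le_ak; rewrite (_ : (k.+1 * i.+1 <= a)%N = false) ?andbF //.
by apply/negbTE; rewrite -ltnNge; lia.
Qed.

Lemma head_des_0or1 x w : head_des x w = 0%N \/ head_des x w = 1%N.
Proof. by rewrite /head_des; case: w => [|y w]; [left | case: ifP; [right | left]]. Qed.

Lemma path_take_weak x w i : head_des x w = 0%N ->
  path leq x (take i w) = sorted leq (take i w).
Proof. by case: w i => [|y w] [|i] //=; rewrite /head_des; case: ltnP => // ->. Qed.

Lemma path_take_desc x w i : head_des x w = 1%N -> path leq x (take i w) = (i == 0%N).
Proof.
by case: w i => [|y w] [|i] //=; rewrite /head_des; case: ltnP => //; rewrite leqNgt => ->.
Qed.

Lemma lhs_cons_coef x w a b : lhs (x :: w) a b =
  (if b is b'.+1 then lhs (x :: w) a b' else 0) +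
  (if [&& 0 < x, head_des x w <= b & b <= a]%N
   then lhs w (a - b)%N (b - head_des x w)%N else 0).
Proof.
rewrite /lhs; case: b => [|k].
  rewrite add0r !prodH0_coef leqn0 subn0 leq0n andbT letters_pos_cons /=.
  case: (head_des_0or1 x w) => hd; rewrite hd /=.
    have := path_take_weak (size w) hd; rewrite take_size => ->.
    by case: (0 < x)%N; rewrite ?andbF.
  by case: w hd => [|y w] //; rewrite /head_des /=; case: ltnP => [_ _ | _ //]; rewrite andbF.
rewrite prodH_succ_cons_coef; congr (_ + _).
case: (head_des_0or1 x w) => hd; rewrite hd.
  under eq_bigr => i _ do rewrite (path_take_weak _ hd).
  by rewrite subn0 -prodH_succ_coef.
rewrite subSS subn0 /=; case: (_ && _) => //.
rewrite big_ord_recl big1 => [|i _]; last by rewrite (path_take_desc _ hd).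
by rewrite (path_take_desc _ hd) muln0 subn0 drop0 addr0 take0.
Qed.

Lemma lhs_word_recursion : word_recursion lhs.
Proof.
split=> [|x w]; first exact: lhs_nil.
apply: geom0_solve => a b; rewrite lhs_cons_coef; congr (_ + _).
case: (0 < x)%N => //=.
by rewrite tq_subst_monoE andbC.
Qed.

Lemma sums_to_supp1 (F : nat -> ncs) (S : ncs) (m : seq nat -> nat -> nat -> nat) :
  (forall n w a b, n != m w a b -> F n w a b = 0) ->
  (forall w a b, F (m w a b) w a b = S w a b) -> sums_to F S.
Proof.
move=> F0 FS w a b; exists (m w a b).+1 => M ltM.
by rewrite (@sum_ord_at _ _ (fun n : 'I_M => F n w a b) ltM) ?FS // => n /F0.
Qed.

Theorem lemma17 :
  exists Hs : nat -> ncs,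
    (forall k, sums_to (Hterm k) (Hs k)) /\
    exists S : ncs, sums_to (LHSterm Hs) S /\ sums_to RHSterm S.
Proof.
exists Hq; split.
  move=> k; apply: (@sums_to_supp1 _ _ (fun w _ _ => size w)) => // n w a b n_w.
  by rewrite /Hterm /ncscale /hser eq_sym (negbTE n_w) -/ps0 psmulr0.
exists lhs; split.
  apply: (@sums_to_supp1 _ _ (fun _ _ b => b)) => [n w a b n_b | w a b];
    rewrite /LHSterm /ncscale psmul_monoE subn0 /=; last by rewrite leqnn subnn.
  case: leqP => // le_nb.
  by rewrite prodH_t_free // subn_gt0 ltn_neqAle n_b le_nb.
apply: (@sums_to_supp1 _ _ (fun w _ _ => size w)) => [n w a b n_w | w a b].
  by rewrite /RHSterm /ncscale numer_eq0 // psmulr0.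
by rewrite -/(rhs w) (word_recursion_uniq rhs_word_recursion lhs_word_recursion).
Qed.
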